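(* Let $T>0$, $u\in\mathbb{R}$ and $w(v)=e^{-(v-u)^2/(2T)}$ on $(0,\infty)$. Let $\{B_n\}_{n\ge0}$ be the orthonormal polynomials on $(0,\infty)$ with respect to $w$ ($\deg B_n=n$, positive leading coefficient, $\int_0^\infty B_mB_n w\,dv=\delta_{mn}$), and let $\alpha_n,\beta_n$ be the coefficients of their three-term recurrence $$\sqrt{\beta_{n+1}}\,B_{n+1}=(v-\alpha_n)B_n-\sqrt{\beta_n}\,B_{n-1},\qquad \beta_0=0,\ B_{-1}=0,$$ i.e. $\alpha_n=\int_0^\infty vB_n^2w\,dv$ and $\sqrt{\beta_{n+1}}=\int_0^\infty vB_nB_{n+1}w\,dv$. Then $\alpha_0=m_1/m_0$ with $m_i=\int_0^\infty v^iw(v)\,dv$, and for all $n\ge0$, $$\beta_{n+1}=2Tn+T-\beta_n+u\alpha_n-\alpha_n^2,\qquad \alpha_{n+1}=\frac{T}{\beta_{n+1}}\sum_{k=0}^n\alpha_k-\alpha_n+u.$$ *)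

From Stdlib Require Import Reals.
Open Scope R_scope.

Definition weight (T u : R) (v : R) : R := exp (- ((v - u) ^ 2) / (2 * T)).

Definition improper_integral_0_inf (f : R -> R) (l : R) : Prop :=
  exists F : R -> R,
    (forall b : R, 0 <= b -> exists pr : Riemann_integrable f 0 b, RiemannInt pr = F b) /\
    (forall eps : R, eps > 0 -> exists M : R, forall b : R, b >= M -> Rabs (F b - l) < eps).

Definition poly_deg_pos_lead (p : R -> R) (n : nat) : Prop :=
  exists c : nat -> R, c n > 0 /\ forall x : R, p x = sum_f_R0 (fun k => c k * x ^ k) n.

(* Since T w' = -(v - u) w, integration by parts gives, for every polynomial f,
     int_0^oo (v - u) f w = T (int_0^oo f' w + f(0) w(0));
   the boundary term at infinity vanishes because f w and v f w both have limits there.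
   Every polynomial is integrable against w, being a combination of the B_k with B_0 constant.
   Write sigma_n = sqrt(beta_(n+1)). Taking f = v B_n^2 and expanding v B_n by the three-term
   recurrence gives sigma_n^2 + alpha_n^2 + sigma_(n-1)^2 - u alpha_n = T (2n + 1).
   Taking f = v B_(n+1) B_n gives sigma_n (alpha_(n+1) + alpha_n - u) = T int_0^oo v B_(n+1)' B_n w,
   and differentiating the recurrence shows sigma_n int_0^oo v B_(n+1)' B_n w = alpha_0 + ... + alpha_n. *)

From Stdlib Require Import Reals Lra Lia FunctionalExtensionality.
From Coquelicot Require Import Coquelicot.
Open Scope R_scope.

Local Notation II := improper_integral_0_inf.

Lemma lim_infty_iff (F : R -> R) (l : R) :
  (forall eps : R, eps > 0 -> exists M : R, forall b : R, b >= M -> Rabs (F b - l) < eps) <->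
  is_lim F p_infty l.
Proof.
  rewrite <- is_lim_spec. split.
  - intros H eps. destruct (H eps (cond_pos eps)) as [M HM].
    exists M. intros b Hb. apply HM. lra.
  - intros H eps Heps. destruct (H (mkposreal eps Heps)) as [M HM].
    exists (M + 1). intros b Hb. apply HM. lra.
Qed.

Lemma II_iff (f : R -> R) (l : R) :
  II f l <-> exists F : R -> R,
    (forall b : R, 0 <= b -> exists pr : Riemann_integrable f 0 b, RiemannInt pr = F b) /\
    is_lim F p_infty l.
Proof.
  unfold improper_integral_0_inf.
  split; intros [F [HF Hl]]; exists F; split; try apply lim_infty_iff; assumption.
Qed.

Lemma II_eq (f g : R -> R) (a b : R) :
  II f a -> (forall x, f x = g x) -> a = b -> II g b.
Proof.
  intros Hf Hfg <-. revert Hf. replace g with f by (apply functional_extensionality; exact Hfg). easy.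
Qed.

Lemma II_zero : II (fun _ => 0) 0.
Proof.
  apply II_iff. exists (fun _ => 0). split.
  - intros b _. exists (RiemannInt_P14 0 b 0).
    etransitivity; [apply RiemannInt_P15 | ring].
  - apply is_lim_const.
Qed.

Lemma II_lin (f g : R -> R) (a b r : R) :
  II f a -> II g b -> II (fun x => f x + r * g x) (a + r * b).
Proof.
  rewrite !II_iff. intros [F [HF HFl]] [G [HG HGl]].
  exists (fun x => F x + r * G x). split.
  - intros x Hx. destruct (HF x Hx) as [pf <-]. destruct (HG x Hx) as [pg <-].
    exists (RiemannInt_P10 r pf pg). apply RiemannInt_P13.
  - apply (is_lim_plus' F (fun x => r * G x)); [exact HFl|].
    exact (is_lim_scal_l G r p_infty b HGl).
Qed.

Lemma II_scal (f : R -> R) (a r : R) : II f a -> II (fun x => r * f x) (r * a).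
Proof.
  intros Hf. apply (II_eq _ _ _ _ (II_lin _ _ _ _ r II_zero Hf)); intros; simpl; ring.
Qed.

Lemma II_unique (f : R -> R) (a b : R) : II f a -> II f b -> a = b.
Proof.
  rewrite !II_iff. intros [F [HF HFl]] [G [HG HGl]].
  assert (HFG : is_lim G p_infty a).
  { apply (is_lim_ext_loc F); [|exact HFl].
    exists 0. intros x Hx. destruct (HF x ltac:(lra)) as [pf <-].
    destruct (HG x ltac:(lra)) as [pg <-]. apply RiemannInt_P5. }
  apply is_lim_unique in HFG, HGl. rewrite HFG in HGl. now injection HGl.
Qed.

Lemma II_antiderivative_lim (G g : R -> R) (l : R) :
  (forall x, is_derive G x (g x)) -> (forall x, continuous g x) ->
  II g l -> is_lim G p_infty (l + G 0).
Proof.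
  intros HG Hg. rewrite II_iff. intros [F [HF HFl]].
  apply (is_lim_ext_loc (fun b => F b + G 0)).
  - exists 0. intros b Hb. destruct (HF b ltac:(lra)) as [pr <-].
    rewrite <- RInt_Reals.
    rewrite (is_RInt_unique g 0 b (G b - G 0)); [ring|].
    apply (is_RInt_derive G g); auto.
  - apply is_lim_plus'; [exact HFl | apply is_lim_const].
Qed.

Lemma lim_eq0_of_lim_mul_id (h : R -> R) (L L' : R) :
  is_lim h p_infty L -> is_lim (fun b => b * h b) p_infty L' -> L = 0.
Proof.
  intros Hh Hbh.
  assert (H0 : is_lim h p_infty 0).
  { apply (is_lim_ext_loc (fun b => b * h b * / b)).
    - exists 0. intros b Hb. field. lra.
    - replace (Finite 0) with (Rbar_mult L' (Rbar_inv p_infty)) by (simpl; f_equal; ring).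
      apply (is_lim_mult _ (fun b => / b)); [exact Hbh | | easy].
      apply is_lim_inv; [apply is_lim_id | easy]. }
  apply is_lim_unique in Hh, H0. rewrite Hh in H0. now injection H0.
Qed.

(* [in_span b n p]: p is a linear combination of b 0, ..., b (n - 1); the top coefficient is
   peeled off first. *)
Fixpoint in_span (b : nat -> R -> R) (n : nat) (p : R -> R) : Prop :=
  match n with
  | O => forall x, p x = 0
  | S k => exists a, in_span b k (fun x => p x - a * b k x)
  end.

Section Span.
Variable b : nat -> R -> R.

Lemma in_span_ext n p q : (forall x, p x = q x) -> in_span b n p -> in_span b n q.
Proof.
  revert p q. induction n as [|n IH]; simpl; intros p q Hpq.
  - intros Hp x. rewrite <- Hpq. apply Hp.
  - intros [a Ha]. exists a. revert Ha. apply IH. intros x. rewrite Hpq. reflexivity.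
Qed.

Lemma in_span_lin n p q r s :
  in_span b n p -> in_span b n q -> in_span b n (fun x => r * p x + s * q x).
Proof.
  revert p q. induction n as [|n IH]; simpl; intros p q.
  - intros Hp Hq x. rewrite Hp, Hq. ring.
  - intros [a Ha] [c Hc]. exists (r * a + s * c).
    eapply in_span_ext; [|exact (IH _ _ Ha Hc)]. intros x. simpl. ring.
Qed.

Lemma in_span_zero n : in_span b n (fun _ => 0).
Proof.
  induction n as [|n IH]; simpl.
  - reflexivity.
  - exists 0. eapply in_span_ext; [|exact IH]. intros x. simpl. ring.
Qed.

Lemma in_span_S n p : in_span b n p -> in_span b (S n) p.
Proof. intros Hp. exists 0. eapply in_span_ext; [|exact Hp]. intros x. simpl. ring. Qed.

Lemma in_span_le n m p : (n <= m)%nat -> in_span b n p -> in_span b m p.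
Proof. induction 1; auto using in_span_S. Qed.

Lemma in_span_gen j : in_span b (S j) (b j).
Proof. exists 1. eapply in_span_ext; [|exact (in_span_zero j)]. intros x. simpl. ring. Qed.

End Span.

Definition deg_lt (n : nat) : (R -> R) -> Prop := in_span (fun k x => x ^ k) n.

Lemma deg_lt_pow n : deg_lt (S n) (fun x => x ^ n).
Proof. apply (in_span_gen (fun k x => x ^ k)). Qed.

Lemma deg_lt_sum_f_R0 (c : nat -> R) n :
  deg_lt (S n) (fun x => sum_f_R0 (fun k => c k * x ^ k) n).
Proof.
  induction n as [|n IH]; simpl.
  - exists (c 0%nat). intros x. simpl. ring.
  - exists (c (S n)). eapply in_span_ext; [|exact IH]. intros x. simpl. ring.
Qed.

Lemma deg_lt_mul_id n p : deg_lt n p -> deg_lt (S n) (fun x => x * p x).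
Proof.
  revert p. induction n as [|n IH]; simpl; intros p.
  - intros Hp. exists 0. intros x. rewrite Hp. ring.
  - intros [a Ha]. exists a. eapply in_span_ext; [|exact (IH _ Ha)]. intros x. simpl. ring.
Qed.

Lemma deg_lt_mul_pow n k p : deg_lt n p -> deg_lt (k + n) (fun x => x ^ k * p x).
Proof.
  intros Hp. induction k as [|k IH]; simpl.
  - eapply in_span_ext; [|exact Hp]. intros x. simpl. ring.
  - eapply in_span_ext; [|exact (deg_lt_mul_id _ _ IH)]. intros x. simpl. ring.
Qed.

Lemma deg_lt_mul n k p q : deg_lt n p -> deg_lt k q -> deg_lt (n + k) (fun x => p x * q x).
Proof.
  intros Hp. revert q. induction k as [|k IH]; intros q.
  - intros Hq. cbn in Hq. apply (in_span_le _ 0); [lia|]. intros x. simpl. rewrite Hq. ring.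
  - intros [a Ha]. apply (in_span_ext _ _ (fun x => 1 * (p x * (q x - a * x ^ k)) + a * (x ^ k * p x))).
    { intros x. ring. }
    apply in_span_lin.
    + apply (in_span_le _ (n + k)); [lia|]. exact (IH _ Ha).
    + apply (in_span_le _ (k + n)); [lia|]. exact (deg_lt_mul_pow _ _ _ Hp).
Qed.

Lemma deg_lt_S_inv n p : deg_lt (S n) p ->
  exists a q, deg_lt n q /\ p = (fun x => q x + a * x ^ n).
Proof.
  intros [a Ha]. exists a, (fun x => p x - a * x ^ n). split; [exact Ha|].
  apply functional_extensionality. intros x. ring.
Qed.

Lemma deg_lt_0_inv p : deg_lt 0 p -> p = (fun _ => 0).
Proof. intros Hp. apply functional_extensionality. exact Hp. Qed.

Lemma deg_lt_ex_derive n p x : deg_lt n p -> ex_derive p x.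
Proof.
  revert p. induction n as [|n IH]; intros p Hp.
  - rewrite (deg_lt_0_inv _ Hp). apply ex_derive_const.
  - destruct (deg_lt_S_inv _ _ Hp) as [a [q [Hq ->]]].
    apply (ex_derive_plus q (fun t => a * t ^ n)); [exact (IH _ Hq)|].
    apply ex_derive_scal, ex_derive_pow, ex_derive_id.
Qed.

Lemma Derive_add_monomial (q : R -> R) a n x : ex_derive q x ->
  Derive (fun t => q t + a * t ^ n) x = Derive q x + a * (INR n * x ^ pred n).
Proof.
  intros Hq. rewrite (Derive_plus q (fun t => a * t ^ n)), Derive_scal, Derive_pow, Derive_id.
  - ring.
  - apply ex_derive_id.
  - exact Hq.
  - apply ex_derive_scal, ex_derive_pow, ex_derive_id.
Qed.

Lemma Derive_id_mul_mul (p q : R -> R) x : ex_derive p x -> ex_derive q x ->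
  Derive (fun v => v * p v * q v) x = p x * q x + x * Derive p x * q x + x * p x * Derive q x.
Proof.
  intros Hp Hq.
  rewrite (Derive_mult (fun v => v * p v) q), (Derive_mult (fun v => v)), Derive_id; [ring|..].
  - apply ex_derive_id.
  - exact Hp.
  - apply (ex_derive_mult (fun v => v)); [apply ex_derive_id | exact Hp].
  - exact Hq.
Qed.

Lemma deg_lt_Derive n p : deg_lt (S n) p -> deg_lt n (Derive p).
Proof.
  revert p. induction n as [|n IH]; intros p Hp;
    destruct (deg_lt_S_inv _ _ Hp) as [a [q [Hq ->]]].
  - intros x. rewrite Derive_add_monomial by exact (deg_lt_ex_derive _ _ _ Hq).
    rewrite (deg_lt_0_inv _ Hq), Derive_const. simpl. ring.
  - exists (a * INR (S n)). eapply in_span_ext; [|exact (IH _ Hq)]. intros x.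
    rewrite Derive_add_monomial by exact (deg_lt_ex_derive _ _ _ Hq). simpl. ring.
Qed.

(* Euler's identity for monomials, x (x^n)' = n x^n, kills the leading term. *)
Lemma deg_lt_euler n p : deg_lt (S n) p -> deg_lt n (fun x => x * Derive p x - INR n * p x).
Proof.
  revert p. induction n as [|n IH]; intros p Hp;
    destruct (deg_lt_S_inv _ _ Hp) as [a [q [Hq ->]]].
  - intros x. rewrite Derive_add_monomial by exact (deg_lt_ex_derive _ _ _ Hq).
    rewrite (deg_lt_0_inv _ Hq), Derive_const. simpl. ring.
  - apply (in_span_ext _ _ (fun x => 1 * (x * Derive q x - INR n * q x) + (-1) * q x)).
    + intros x. rewrite Derive_add_monomial by exact (deg_lt_ex_derive _ _ _ Hq).
      rewrite S_INR. simpl. ring.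
    + apply in_span_lin; [apply in_span_S, IH|]; exact Hq.
Qed.

Lemma deg_lt_mul_id_Derive n p : deg_lt n p -> deg_lt n (fun x => x * Derive p x).
Proof.
  destruct n as [|n]; intros Hp.
  - intros x. rewrite (deg_lt_0_inv _ Hp), Derive_const. ring.
  - apply (in_span_ext _ _ (fun x => 1 * (x * Derive p x - INR n * p x) + INR n * p x)).
    + intros x. ring.
    + apply in_span_lin; [apply in_span_S, deg_lt_euler|]; exact Hp.
Qed.

Lemma deg_lt_continuous n p x : deg_lt n p -> continuous p x.
Proof. intros Hp. apply (ex_derive_continuous p), (deg_lt_ex_derive n), Hp. Qed.

Lemma deg_lt_mul_id_sub n p (u : R) : deg_lt n p -> deg_lt (S n) (fun x => (x - u) * p x).
Proof.
  intros Hp. apply (in_span_ext _ _ (fun x => 1 * (x * p x) + (- u) * p x)); [intros x; ring|].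
  apply in_span_lin; [apply deg_lt_mul_id | apply in_span_S]; exact Hp.
Qed.

Lemma poly_deg_pos_lead_deg_lt p n : poly_deg_pos_lead p n ->
  exists c, c > 0 /\ deg_lt n (fun x => p x - c * x ^ n).
Proof.
  intros [c [Hc Hp]]. exists (c n). split; [exact Hc|].
  destruct n as [|n].
  - intros x. rewrite Hp. simpl. ring.
  - eapply in_span_ext; [|exact (deg_lt_sum_f_R0 c n)]. intros x. rewrite Hp. simpl. ring.
Qed.

Lemma weight_derive T u x : T <> 0 ->
  is_derive (weight T u) x (- (x - u) / T * weight T u x).
Proof.
  intros hT. unfold weight. auto_derive; [easy|].
  replace (- ((x + - u) * ((x + - u) * 1)) * / (2 * T)) with (- (x - u) ^ 2 / (2 * T))
    by (field; exact hT).
  field. exact hT.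
Qed.

Lemma weight_continuous T u x : T <> 0 -> continuous (weight T u) x.
Proof. intros hT. apply (ex_derive_continuous (weight T u)). eexists. apply weight_derive, hT. Qed.

Lemma weighted_boundary_lim T u (f : R -> R) a c : T <> 0 ->
  (forall x, ex_derive f x) ->
  (forall x, continuous (fun v => Derive f v - (v - u) * f v / T) x) ->
  II (fun v => Derive f v * weight T u v) a ->
  II (fun v => (v - u) * f v * weight T u v) c ->
  is_lim (fun b => f b * weight T u b) p_infty (a - c / T + f 0 * weight T u 0).
Proof.
  intros hT Hf Hh Ha Hc.
  apply (II_antiderivative_lim (fun b => f b * weight T u b)
           (fun v => (Derive f v - (v - u) * f v / T) * weight T u v) (a - c / T)).
  - intros x.
    assert (H := is_derive_mult f (weight T u) x _ _ (Derive_correct f x (Hf x))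
                   (weight_derive T u x hT) Rmult_comm).
    unfold mult, plus in H; simpl in H.
    replace ((Derive f x - (x - u) * f x / T) * weight T u x)
      with (Derive f x * weight T u x + f x * (- (x - u) / T * weight T u x)) by (field; exact hT).
    exact H.
  - intros x. apply (continuous_mult (fun v => Derive f v - (v - u) * f v / T) (weight T u)).
    + apply Hh.
    + apply weight_continuous, hT.
  - apply (II_eq _ _ _ _ (II_lin _ _ _ _ (- / T) Ha Hc)); [intros x; simpl|]; field; exact hT.
Qed.

Lemma deg_lt_weighted_boundary_lim T u k (f : R -> R) a c : T <> 0 -> deg_lt k f ->
  II (fun v => Derive f v * weight T u v) a ->
  II (fun v => (v - u) * f v * weight T u v) c ->
  is_lim (fun b => f b * weight T u b) p_infty (a - c / T + f 0 * weight T u 0).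
Proof.
  intros hT Hf. apply weighted_boundary_lim; [exact hT | intros x; exact (deg_lt_ex_derive _ _ x Hf)|].
  intros x. apply (deg_lt_continuous (S k)).
  apply (in_span_ext _ _ (fun v => 1 * Derive f v + (- / T) * ((v - u) * f v))).
  { intros v. field. exact hT. }
  apply in_span_lin.
  - apply in_span_S, deg_lt_Derive, in_span_S, Hf.
  - apply deg_lt_mul_id_sub, Hf.
Qed.

Section OrthonormalPolynomials.

Variables T u : R.
Hypothesis hT : T > 0.
Variable B : nat -> R -> R.
Hypothesis hlead : forall n, exists c, c <> 0 /\ deg_lt n (fun x => B n x - c * x ^ n).
Hypothesis horth : forall m n,
  II (fun v => B m v * B n v * weight T u v) (if Nat.eqb m n then 1 else 0).

Local Notation w := (weight T u).

Lemma deg_lt_B n : deg_lt (S n) (B n).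
Proof.
  destruct (hlead n) as [c [_ Hc]].
  apply (in_span_ext _ _ (fun x => 1 * (B n x - c * x ^ n) + c * x ^ n)); [intros x; ring|].
  apply in_span_lin; [apply in_span_S, Hc | apply deg_lt_pow].
Qed.

Lemma B0_const : exists c, c <> 0 /\ forall x, B 0 x = c.
Proof.
  destruct (hlead 0) as [c [Hc H0]]. exists c. split; [exact Hc|].
  intros x. specialize (H0 x). simpl in H0. lra.
Qed.

Lemma deg_lt_in_span_B n p : deg_lt n p -> in_span B n p.
Proof.
  revert p. induction n as [|n IH]; intros p Hp; [exact Hp|].
  destruct (deg_lt_S_inv _ _ Hp) as [a [q [Hq ->]]].
  destruct (hlead n) as [c [Hc Hr]].
  exists (a / c).
  apply (in_span_ext _ _ (fun x => 1 * q x + (- (a / c)) * (B n x - c * x ^ n))).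
  { intros x. field. exact Hc. }
  apply in_span_lin; apply IH; assumption.
Qed.

Lemma in_span_B_orth n m p : in_span B n p -> (n <= m)%nat ->
  II (fun v => p v * B m v * w v) 0.
Proof.
  revert p. induction n as [|n IH]; intros p Hp Hnm.
  - apply (II_eq _ _ _ _ II_zero); [intros x; simpl in Hp; rewrite Hp; ring | reflexivity].
  - destruct Hp as [a Ha].
    pose proof (horth n m) as Hnm'. destruct (Nat.eqb_spec n m) as [|_]; [lia|].
    apply (II_eq _ _ _ _ (II_lin _ _ _ _ a (IH _ Ha ltac:(lia)) Hnm'));
      [intros x; simpl; ring | ring].
Qed.

Lemma deg_lt_orth n m p : deg_lt n p -> (n <= m)%nat -> II (fun v => p v * B m v * w v) 0.
Proof. intros Hp. apply in_span_B_orth, deg_lt_in_span_B, Hp. Qed.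

Lemma deg_lt_eq0_of_orth n p : deg_lt n p ->
  (forall m, (m < n)%nat -> II (fun v => p v * B m v * w v) 0) -> forall x, p x = 0.
Proof.
  intros Hp. apply deg_lt_in_span_B in Hp. revert p Hp.
  induction n as [|n IH]; intros p Hp Horth; [exact Hp|].
  destruct Hp as [a Ha].
  assert (Ha0 : a = 0).
  { pose proof (horth n n) as Hnn. rewrite Nat.eqb_refl in Hnn.
    apply (II_unique (fun v => p v * B n v * w v)); [|exact (Horth n ltac:(lia))].
    apply (II_eq _ _ _ _ (II_lin _ _ _ _ a (in_span_B_orth _ _ _ Ha (le_n n)) Hnn));
      [intros x; simpl; ring | ring]. }
  subst a. apply IH.
  - eapply in_span_ext; [|exact Ha]. intros x. simpl. ring.
  - intros m Hm. apply Horth. lia.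
Qed.

Lemma deg_lt_integrable n p : deg_lt n p -> exists l, II (fun v => p v * w v) l.
Proof.
  intros Hp. apply deg_lt_in_span_B in Hp. revert p Hp.
  destruct B0_const as [c [Hc HB0]].
  induction n as [|n IH]; intros p Hp.
  - exists 0. apply (II_eq _ _ _ _ II_zero); [intros x; simpl in Hp; rewrite Hp; ring | reflexivity].
  - destruct Hp as [a Ha]. destruct (IH _ Ha) as [l Hl].
    exists (l + a * (/ c * (if Nat.eqb n 0 then 1 else 0))).
    apply (II_eq _ _ _ _ (II_lin _ _ _ _ a Hl (II_scal _ _ (/ c) (horth n 0))));
      [intros x; simpl; rewrite HB0; field; exact Hc | reflexivity].
Qed.

Lemma integration_by_parts k f a c : deg_lt k f ->
  II (fun v => Derive f v * w v) a -> II (fun v => (v - u) * f v * w v) c ->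
  c = T * (a + f 0 * w 0).
Proof.
  intros Hf Ha Hc.
  assert (HT : T <> 0) by lra.
  assert (Hg : deg_lt (S k) (fun v => v * f v)) by exact (deg_lt_mul_id _ _ Hf).
  destruct (deg_lt_integrable _ _ (deg_lt_Derive _ _ (in_span_S _ _ _ Hg))) as [a' Ha'].
  destruct (deg_lt_integrable _ _ (deg_lt_mul_id_sub _ _ u Hg)) as [c' Hc'].
  assert (Hlim := deg_lt_weighted_boundary_lim T u k f a c HT Hf Ha Hc).
  assert (Hlim' := deg_lt_weighted_boundary_lim T u _ _ a' c' HT Hg Ha' Hc').
  apply (is_lim_ext (fun b => b * f b * w b) (fun b => b * (f b * w b))) in Hlim';
    [|intros x; ring].
  assert (Hzero := lim_eq0_of_lim_mul_id _ _ _ Hlim Hlim').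
  apply (Rmult_eq_compat_l T) in Hzero. field_simplify in Hzero; [lra | exact HT].
Qed.

Variables alpha sigma : nat -> R.
Hypothesis halpha : forall n, II (fun v => v * B n v ^ 2 * w v) (alpha n).
Hypothesis hsigma : forall n, II (fun v => v * B n v * B (S n) v * w v) (sigma n).

(* B_(n-1) and sqrt(beta_n), with B_(-1) = 0 and beta_0 = 0. *)
Definition B_prev n : R -> R := match n with O => fun _ => 0 | S k => B k end.
Definition sigma_prev n : R := match n with O => 0 | S k => sigma k end.

Lemma deg_lt_B_prev n : deg_lt n (B_prev n).
Proof. destruct n as [|n]; [intros x; reflexivity | apply deg_lt_B]. Qed.

Lemma inner_B_prev n m :
  II (fun v => B_prev n v * B m v * w v) (if Nat.eqb (S m) n then 1 else 0).
Proof.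
  destruct n as [|n]; simpl.
  - apply (II_eq _ _ _ _ II_zero); [intros x; simpl; ring | reflexivity].
  - rewrite Nat.eqb_sym. apply horth.
Qed.

Lemma moment_x_diag n : II (fun v => v * B n v * B n v * w v) (alpha n).
Proof. apply (II_eq _ _ _ _ (halpha n)); [intros x; simpl; ring | reflexivity]. Qed.

Lemma moment_x_far n m : (S (S m) <= n)%nat -> II (fun v => v * B n v * B m v * w v) 0.
Proof.
  intros Hmn. apply (II_eq _ _ _ _ (deg_lt_orth _ _ _ (deg_lt_mul_id _ _ (deg_lt_B m)) Hmn));
    [intros x; simpl; ring | reflexivity].
Qed.

Lemma moment_x_B_prev n : II (fun v => v * B n v * B_prev n v * w v) (sigma_prev n).
Proof.
  destruct n as [|n]; simpl.
  - apply (II_eq _ _ _ _ II_zero); [intros x; simpl; ring | reflexivity].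
  - apply (II_eq _ _ _ _ (hsigma n)); [intros x; simpl; ring | reflexivity].
Qed.

Definition recurrence_residual n x : R :=
  x * B n x - sigma n * B (S n) x - alpha n * B n x - sigma_prev n * B_prev n x.

Lemma deg_lt_recurrence_residual n : deg_lt (S (S n)) (recurrence_residual n).
Proof.
  apply (in_span_ext _ _ (fun x => 1 * (1 * (x * B n x) + (- sigma n) * B (S n) x)
                                 + 1 * ((- alpha n) * B n x + (- sigma_prev n) * B_prev n x))).
  { intros x. unfold recurrence_residual. ring. }
  apply in_span_lin; apply in_span_lin.
  - apply deg_lt_mul_id, deg_lt_B.
  - apply deg_lt_B.
  - apply in_span_S, deg_lt_B.
  - apply (in_span_le _ n); [lia | apply deg_lt_B_prev].
Qed.

Lemma recurrence_residual_orth n m : (m < S (S n))%nat ->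
  II (fun v => recurrence_residual n v * B m v * w v) 0.
Proof.
  intros Hm.
  assert (Hres : forall mu, II (fun v => v * B n v * B m v * w v) mu ->
    II (fun v => recurrence_residual n v * B m v * w v)
       (mu - sigma n * (if Nat.eqb (S n) m then 1 else 0) - alpha n * (if Nat.eqb n m then 1 else 0)
        - sigma_prev n * (if Nat.eqb (S m) n then 1 else 0))).
  { intros mu Hmu.
    pose proof (II_lin _ _ _ _ (- sigma n) Hmu (horth (S n) m)) as H1.
    pose proof (II_lin _ _ _ _ (- alpha n) H1 (horth n m)) as H2.
    pose proof (II_lin _ _ _ _ (- sigma_prev n) H2 (inner_B_prev n m)) as H3.
    apply (II_eq _ _ _ _ H3); [intros y; unfold recurrence_residual; simpl; ring | ring]. }
  destruct (Nat.eq_dec m (S n)) as [->|Hm1]; [|destruct (Nat.eq_dec m n) as [->|Hm2]].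
  - apply (II_eq _ _ _ _ (Hres _ (hsigma n))); [reflexivity|].
    rewrite Nat.eqb_refl, (proj2 (Nat.eqb_neq n (S n))), (proj2 (Nat.eqb_neq (S (S n)) n));
      [ring | lia | lia].
  - apply (II_eq _ _ _ _ (Hres _ (moment_x_diag n))); [reflexivity|].
    rewrite Nat.eqb_refl, (proj2 (Nat.eqb_neq (S n) n)); [|lia].
    destruct n as [|k]; simpl; ring.
  - rewrite (proj2 (Nat.eqb_neq (S n) m)), (proj2 (Nat.eqb_neq n m)) in Hres by lia.
    destruct (Nat.eq_dec (S m) n) as [<-|Hm3].
    + apply (II_eq _ _ _ _ (Hres _ (moment_x_B_prev (S m)))); [reflexivity|].
      simpl. rewrite Nat.eqb_refl. ring.
    + apply (II_eq _ _ _ _ (Hres _ (moment_x_far n m ltac:(lia)))); [reflexivity|].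
      rewrite (proj2 (Nat.eqb_neq (S m) n)) by exact Hm3. ring.
Qed.

Lemma three_term n x :
  x * B n x = sigma n * B (S n) x + alpha n * B n x + sigma_prev n * B_prev n x.
Proof.
  assert (H := deg_lt_eq0_of_orth _ _ (deg_lt_recurrence_residual n)
                 (recurrence_residual_orth n) x).
  unfold recurrence_residual in H. lra.
Qed.

Lemma moment_xB_sq n :
  II (fun v => v * B n v * (v * B n v) * w v) (sigma n ^ 2 + alpha n ^ 2 + sigma_prev n ^ 2).
Proof.
  pose proof (II_lin _ _ _ _ (alpha n) (II_scal _ _ (sigma n) (hsigma n)) (moment_x_diag n)) as H1.
  pose proof (II_lin _ _ _ _ (sigma_prev n) H1 (moment_x_B_prev n)) as H2.
  apply (II_eq _ _ _ _ H2); [|ring].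
  intros x. simpl. rewrite (three_term n x). ring.
Qed.

Lemma moment_x_B_prev_next n : II (fun v => v * B (S n) v * B_prev n v * w v) 0.
Proof.
  apply (II_eq _ _ _ _ (deg_lt_orth _ _ _ (deg_lt_mul_id _ _ (deg_lt_B_prev n)) (le_n _)));
    [intros x; simpl; ring | reflexivity].
Qed.

Lemma moment_xB_cross n :
  II (fun v => v * B (S n) v * (v * B n v) * w v) (sigma n * (alpha (S n) + alpha n)).
Proof.
  assert (Hsym : II (fun v => v * B (S n) v * B n v * w v) (sigma n))
    by (apply (II_eq _ _ _ _ (hsigma n)); [intros x; simpl; ring | reflexivity]).
  pose proof (II_lin _ _ _ _ (alpha n) (II_scal _ _ (sigma n) (moment_x_diag (S n))) Hsym) as H1.
  pose proof (II_lin _ _ _ _ (sigma_prev n) H1 (moment_x_B_prev_next n)) as H2.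
  apply (II_eq _ _ _ _ H2); [|ring].
  intros x. simpl. rewrite (three_term n x). ring.
Qed.

(* B_(n+1) - (c_(n+1) / c_n) x B_n has degree <= n, so 1 = |B_(n+1)|^2 = (c_(n+1) / c_n) sigma_n. *)
Lemma sigma_neq0 n : sigma n <> 0.
Proof.
  destruct (hlead n) as [c [Hc Hn]]. destruct (hlead (S n)) as [c' [_ HSn]].
  set (r := c' / c).
  assert (Hres : deg_lt (S n) (fun x => B (S n) x - r * (x * B n x))).
  { apply (in_span_ext _ _ (fun x => 1 * (B (S n) x - c' * x ^ S n)
                                     + (- r) * (x * (B n x - c * x ^ n)))).
    { intros x. unfold r. simpl. field. exact Hc. }
    apply in_span_lin; [exact HSn | apply deg_lt_mul_id, Hn]. }
  pose proof (II_lin _ _ _ _ r (deg_lt_orth _ _ _ Hres (le_n _)) (hsigma n)) as H.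
  pose proof (horth (S n) (S n)) as H1. rewrite Nat.eqb_refl in H1.
  assert (E : 1 = 0 + r * sigma n).
  { apply (II_unique _ _ _ H1). apply (II_eq _ _ _ _ H); [intros x; simpl; ring | reflexivity]. }
  intros Hz. rewrite Hz in E. lra.
Qed.

Lemma moment_xdB_diag n : II (fun v => v * Derive (B n) v * B n v * w v) (INR n).
Proof.
  pose proof (deg_lt_orth _ _ _ (deg_lt_euler _ _ (deg_lt_B n)) (le_n n)) as H0.
  pose proof (horth n n) as H1. rewrite Nat.eqb_refl in H1.
  apply (II_eq _ _ _ _ (II_lin _ _ _ _ (INR n) H0 H1)); [intros x; simpl; ring | ring].
Qed.

Lemma moment_xdB_next n : II (fun v => v * Derive (B n) v * B (S n) v * w v) 0.
Proof.
  apply (II_eq _ _ _ _ (deg_lt_orth _ _ _ (deg_lt_mul_id_Derive _ _ (deg_lt_B n)) (le_n _)));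
    [intros x; simpl; ring | reflexivity].
Qed.

Lemma moment_xdB_prev n : II (fun v => v * Derive (B_prev n) v * B n v * w v) 0.
Proof.
  apply (II_eq _ _ _ _ (deg_lt_orth _ _ _ (deg_lt_mul_id_Derive _ _ (deg_lt_B_prev n)) (le_n _)));
    [intros x; simpl; ring | reflexivity].
Qed.

Lemma three_term_Derive n x :
  B n x + x * Derive (B n) x =
  sigma n * Derive (B (S n)) x + alpha n * Derive (B n) x + sigma_prev n * Derive (B_prev n) x.
Proof.
  assert (HB : forall m, ex_derive (B m) x) by (intros m; exact (deg_lt_ex_derive _ _ _ (deg_lt_B m))).
  assert (HBp : ex_derive (B_prev n) x) by exact (deg_lt_ex_derive _ _ _ (deg_lt_B_prev n)).
  transitivity (Derive (fun t => t * B n t) x).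
  - rewrite Derive_mult, Derive_id; [ring | apply ex_derive_id | apply HB].
  - rewrite (Derive_ext _ _ _ (three_term n)).
    rewrite (Derive_plus (fun t => sigma n * B (S n) t + alpha n * B n t)),
      (Derive_plus (fun t => sigma n * B (S n) t)), !Derive_scal.
    + reflexivity.
    + apply ex_derive_scal, HB.
    + apply ex_derive_scal, HB.
    + apply (ex_derive_plus (fun t => sigma n * B (S n) t)); apply ex_derive_scal, HB.
    + apply ex_derive_scal, HBp.
Qed.

(* Pair (B_n + x B_n')(x B_n) against w and expand either factor by the recurrence. *)
Lemma moment_xdB_step n Yp Y :
  II (fun v => v * Derive (B n) v * B_prev n v * w v) Yp ->
  II (fun v => v * Derive (B (S n)) v * B n v * w v) Y ->
  sigma n * Y = alpha n + sigma_prev n * Yp.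
Proof.
  intros HYp HY.
  pose proof (II_lin _ _ _ _ (alpha n) (II_scal _ _ (sigma n) (moment_xdB_next n))
                (moment_xdB_diag n)) as H1.
  pose proof (II_lin _ _ _ _ 1 (moment_x_diag n) (II_lin _ _ _ _ (sigma_prev n) H1 HYp)) as Hway1.
  pose proof (II_lin _ _ _ _ (alpha n) (II_scal _ _ (sigma n) HY) (moment_xdB_diag n)) as H2.
  pose proof (II_lin _ _ _ _ (sigma_prev n) H2 (moment_xdB_prev n)) as Hway2.
  assert (E : alpha n + (sigma n * 0 + alpha n * INR n + sigma_prev n * Yp)
              = sigma n * Y + alpha n * INR n + sigma_prev n * 0).
  { apply (II_unique (fun v => (B n v + v * Derive (B n) v) * (v * B n v) * w v)).
    - apply (II_eq _ _ _ _ Hway1); [|ring]. intros x. simpl. rewrite (three_term n x). ring.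
    - apply (II_eq _ _ _ _ Hway2); [|ring]. intros x. simpl. rewrite (three_term_Derive n x). ring. }
  lra.
Qed.

Lemma moment_xdB n Y : II (fun v => v * Derive (B (S n)) v * B n v * w v) Y ->
  sigma n * Y = sum_f_R0 alpha n.
Proof.
  revert Y. induction n as [|n IH]; intros Y HY.
  - rewrite (moment_xdB_step 0 0 Y); [simpl; ring | |exact HY].
    apply (II_eq _ _ _ _ II_zero); [intros x; simpl; ring | reflexivity].
  - destruct (deg_lt_integrable _ _
      (deg_lt_mul _ _ _ _ (deg_lt_mul_id_Derive _ _ (deg_lt_B (S n))) (deg_lt_B n))) as [Yp HYp].
    rewrite (moment_xdB_step (S n) Yp Y); [| |exact HY].
    + simpl. rewrite (IH Yp); [ring|]. apply (II_eq _ _ _ _ HYp); [intros x; simpl; ring | reflexivity].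
    + apply (II_eq _ _ _ _ HYp); [intros x; simpl; ring | reflexivity].
Qed.

Lemma alpha0_moment_ratio m0 m1 :
  II (fun v => w v) m0 -> II (fun v => v * w v) m1 -> alpha 0 = m1 / m0.
Proof.
  intros Hm0 Hm1. destruct B0_const as [c [_ Hc]].
  assert (E0 : 1 = c * c * m0).
  { apply (II_unique _ _ _ (horth 0 0)).
    apply (II_eq _ _ _ _ (II_scal _ _ (c * c) Hm0)); [intros x; rewrite Hc; ring | reflexivity]. }
  assert (E1 : alpha 0 = c * c * m1).
  { apply (II_unique _ _ _ (halpha 0)).
    apply (II_eq _ _ _ _ (II_scal _ _ (c * c) Hm1)); [intros x; rewrite Hc; ring | reflexivity]. }
  assert (m0 <> 0) by (intros Hz; rewrite Hz in E0; lra).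
  rewrite E1, <- (Rmult_1_r (m1 / m0)), E0. field. assumption.
Qed.

Lemma beta_recurrence n :
  sigma n ^ 2 + alpha n ^ 2 + sigma_prev n ^ 2 - u * alpha n = T * (1 + 2 * INR n).
Proof.
  set (f := fun v => v * B n v * B n v).
  assert (Hf : deg_lt (S (S n) + S n) f)
    by exact (deg_lt_mul _ _ _ _ (deg_lt_mul_id _ _ (deg_lt_B n)) (deg_lt_B n)).
  pose proof (horth n n) as H0. rewrite Nat.eqb_refl in H0.
  assert (Ha : II (fun v => Derive f v * w v) (1 + 2 * INR n)).
  { apply (II_eq _ _ _ _ (II_lin _ _ _ _ 2 H0 (moment_xdB_diag n))); [|ring].
    intros x. unfold f. rewrite Derive_id_mul_mul by exact (deg_lt_ex_derive _ _ _ (deg_lt_B n)).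
    simpl. ring. }
  assert (Hc : II (fun v => (v - u) * f v * w v)
                  (sigma n ^ 2 + alpha n ^ 2 + sigma_prev n ^ 2 - u * alpha n)).
  { apply (II_eq _ _ _ _ (II_lin _ _ _ _ (- u) (moment_xB_sq n) (moment_x_diag n)));
      [intros x; unfold f; simpl; ring | ring]. }
  rewrite (integration_by_parts _ _ _ _ Hf Ha Hc). unfold f. ring.
Qed.

Lemma alpha_recurrence n :
  sigma n ^ 2 * (alpha (S n) + alpha n - u) = T * sum_f_R0 alpha n.
Proof.
  set (f := fun v => v * B (S n) v * B n v).
  assert (Hf : deg_lt (S (S (S n)) + S n) f)
    by exact (deg_lt_mul _ _ _ _ (deg_lt_mul_id _ _ (deg_lt_B (S n))) (deg_lt_B n)).
  destruct (deg_lt_integrable _ _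
    (deg_lt_mul _ _ _ _ (deg_lt_mul_id_Derive _ _ (deg_lt_B (S n))) (deg_lt_B n))) as [Y HY].
  assert (HY' : II (fun v => v * Derive (B (S n)) v * B n v * w v) Y)
    by (apply (II_eq _ _ _ _ HY); [intros x; simpl; ring | reflexivity]).
  pose proof (horth (S n) n) as H0. rewrite (proj2 (Nat.eqb_neq (S n) n)) in H0 by lia.
  assert (Ha : II (fun v => Derive f v * w v) Y).
  { apply (II_eq _ _ _ _ (II_lin _ _ _ _ 1 (II_lin _ _ _ _ 1 H0 HY') (moment_xdB_next n))); [|ring].
    intros x. unfold f. rewrite Derive_id_mul_mul by exact (deg_lt_ex_derive _ _ _ (deg_lt_B _)).
    simpl. ring. }
  assert (Hc : II (fun v => (v - u) * f v * w v) (sigma n * (alpha (S n) + alpha n - u))).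
  { apply (II_eq _ _ _ _ (II_lin _ _ _ _ (- u) (moment_xB_cross n) (hsigma n)));
      [intros x; unfold f; simpl; ring | ring]. }
  rewrite <- (moment_xdB n Y HY').
  replace (sigma n ^ 2 * (alpha (S n) + alpha n - u))
    with (sigma n * (sigma n * (alpha (S n) + alpha n - u))) by ring.
  rewrite (integration_by_parts _ _ _ _ Hf Ha Hc). unfold f. ring.
Qed.

End OrthonormalPolynomials.

Theorem mainTheorem3 (T u : R) (hT : T > 0)
  (B : nat -> R -> R) (alpha beta : nat -> R) (m0 m1 : R)
  (hdeg : forall n : nat, poly_deg_pos_lead (B n) n)
  (horth : forall m n : nat,
     improper_integral_0_inf (fun v => B m v * B n v * weight T u v)
       (if Nat.eqb m n then 1 else 0))
  (hm0 : improper_integral_0_inf (fun v => weight T u v) m0)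
  (hm1 : improper_integral_0_inf (fun v => v * weight T u v) m1)
  (halpha : forall n : nat,
     improper_integral_0_inf (fun v => v * B n v ^ 2 * weight T u v) (alpha n))
  (hbeta0 : beta 0%nat = 0)
  (hbeta_nonneg : forall n : nat, 0 <= beta (S n))
  (hbeta : forall n : nat,
     improper_integral_0_inf (fun v => v * B n v * B (S n) v * weight T u v)
       (sqrt (beta (S n)))) :
  alpha 0%nat = m1 / m0 /\
  (forall n : nat,
     beta (S n) = 2 * T * INR n + T - beta n + u * alpha n - alpha n ^ 2 /\
     alpha (S n) = T / beta (S n) * sum_f_R0 alpha n - alpha n + u).
Proof.
  set (sigma := fun n => sqrt (beta (S n))).
  assert (hlead : forall n, exists c, c <> 0 /\ deg_lt n (fun x => B n x - c * x ^ n)).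
  { intros n. destruct (poly_deg_pos_lead_deg_lt _ _ (hdeg n)) as [c [Hc Hn]].
    exists c. split; [lra | exact Hn]. }
  assert (hsq : forall n, beta n = sigma_prev sigma n ^ 2).
  { intros [|n]; [simpl; rewrite hbeta0; ring | unfold sigma_prev, sigma; rewrite pow2_sqrt; auto]. }
  split; [exact (alpha0_moment_ratio T u B hlead horth alpha halpha m0 m1 hm0 hm1)|].
  intros n.
  pose proof (beta_recurrence T u hT B hlead horth alpha sigma halpha hbeta n) as Hb.
  pose proof (alpha_recurrence T u hT B hlead horth alpha sigma halpha hbeta n) as Ha.
  pose proof (sigma_neq0 T u B hlead horth sigma hbeta n) as Hs.
  rewrite (hsq (S n)), (hsq n). simpl sigma_prev. split; [lra|].
  replace (T / sigma n ^ 2 * sum_f_R0 alpha n) with (T * sum_f_R0 alpha n / sigma n ^ 2)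
    by (field; exact Hs).
  rewrite <- Ha. field. exact Hs.
Qed.
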